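(* Let $G$ be a finite simple graph and $m$ a positive integer. The generalized Mycielskian ${\sf M}_m(G)$ is a cover graph if and only if $G$ is bipartite.
   Context: A graph is a cover graph if it is the underlying (undirected) graph of the Hasse diagram of some finite partially ordered set. For a graph $G$ with vertex set $V_0=\{\langle 0,j\rangle : 0\le j\le n-1\}$ and edge set $E_0$, and $m>0$, the generalized Mycielskian ${\sf M}_m(G)$ has vertex set $V_0\cup V_1\cup\cdots\cup V_m\cup\{u\}$ where $V_i=\{\langle i,j\rangle: 0\le j\le n-1\}$, and edge set $E_0\cup E_1\cup\cdots\cup E_m\cup\{\langle m,j\rangle u: 0\le j\le n-1\}$, where $E_i=\{\langle i-1,j\rangle\langle i,k\rangle : \langle 0,j\rangle\langle 0,k\rangle\in E_0\}$ for $1\le i\le m$. *)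

From mathcomp Require Import all_boot.
Set Implicit Arguments. Unset Strict Implicit. Unset Printing Implicit Defensive.

Definition simple_graph (T : finType) (e : rel T) :=
  symmetric e /\ irreflexive e.

Definition bipartite (T : finType) (e : rel T) :=
  exists c : T -> bool, forall x y, e x y -> c x != c y.

Definition covers (T : finType) (lt : rel T) (x y : T) :=
  lt x y && [forall z, ~~ (lt x z && lt z y)].

Definition cover_graph (T : finType) (e : rel T) :=
  exists lt : rel T, irreflexive lt /\ transitive lt /\
    forall x y, e x y = covers lt x y || covers lt y x.

(* Generalized Mycielskian M_m(G) of G on vertices <0,j>, j < n.
   Vertex <i,j> (0 <= i <= m, j < n) is Some (i, j); the apex u is None. *)
Definition myc_vertex (n m : nat) := option ('I_m.+1 * 'I_n)%type.

Definition myc_edge {n : nat} (m : nat) (G : rel 'I_n) : rel (myc_vertex n m) :=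
  fun x y =>
    match x, y with
    | Some (i, j), Some (i', k) =>
        [|| [&& (i == 0 :> nat), (i' == 0 :> nat) & G j k],
            (i' == i.+1 :> nat) && G j k
          | (i == i'.+1 :> nat) && G j k]
    | Some (i, _), None => (i == m :> nat)
    | None, Some (i, _) => (i == m :> nat)
    | None, None => false
    end.
Arguments myc_edge {n} m G.

From mathcomp Require Import all_boot zify.
Set Implicit Arguments. Unset Strict Implicit. Unset Printing Implicit Defensive.

(* Orient a cover graph upward.  Around a 4-cycle x0 x1 x2 x3 the two paths
   from x0 to x2 then have the same number of upward steps: an orientation by
   an order admits no directed cycle and no directed path bypassing an edge.
   Let w be a closed walk of length L in G.  In M_m(G), the closed walk of
   length 2L zigzagging along w between layers k and k+1 is turned, square by
   square, into the one between layers k+1 and k+2, so all of them have the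
   same number of upward steps.  Between layers 0 and 1 that number is twice
   the count of w in layer 0, hence even; between layer m and the apex each
   apex edge is traversed once in each direction, so it is L.  Hence every
   closed walk of G is even and G is bipartite.  Conversely, a 2-colouring of G
   together with colour 2 at the apex properly 3-colours M_m(G), which is
   triangle-free for m > 0, and orienting edges by increasing colour yields an
   order whose covering pairs are exactly the edges. *)

Section CoverEdges.

Variables (T : finType) (e lt : rel T).
Hypotheses (lt_irr : irreflexive lt) (lt_trans : transitive lt)
  (e_cover : forall x y, e x y = covers lt x y || covers lt y x).

Lemma cover_edge_orient x y : e x y -> lt y x = ~~ lt x y.
Proof.
have lt_asym u v : lt u v -> lt v u = false.
  by move=> huv; apply/negbTE/negP => /(lt_trans huv); rewrite lt_irr.
by rewrite e_cover => /orP[]/andP[h _]; rewrite h ?(lt_asym _ _ h).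
Qed.

Lemma cover_edge_no_between a b c : e a c -> lt a b -> lt b c -> False.
Proof.
rewrite e_cover => /orP[/andP[_ /forallP/(_ b) no_b]|/andP[hca _]] hab hbc.
- by rewrite hab hbc in no_b.
- by have := lt_trans (lt_trans hab hbc) hca; rewrite lt_irr.
Qed.

Lemma cover_square_up x0 x1 x2 x3 :
  e x0 x3 -> e x3 x2 -> lt x0 x1 && lt x1 x2 -> lt x0 x3 && lt x3 x2.
Proof.
move=> e03 e32 /andP[h01 h12]; have h02 := lt_trans h01 h12.
have h03 : lt x0 x3.
  apply: contraT; rewrite -(cover_edge_orient e03) => h30.
  by case: (cover_edge_no_between e32 h30 h02).
rewrite h03; apply: contraT; rewrite -(cover_edge_orient e32) => h23.
by case: (cover_edge_no_between e03 h02 h23).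
Qed.

End CoverEdges.

Lemma covers_converse (T : finType) (lt : rel T) x y :
  covers (fun u v => lt v u) x y = covers lt y x.
Proof. by congr (_ && _); apply: eq_forallb => z; rewrite andbC. Qed.

Lemma cover_square (T : finType) (e lt : rel T) :
  irreflexive lt -> transitive lt ->
  (forall x y, e x y = covers lt x y || covers lt y x) ->
  forall x0 x1 x2 x3, e x0 x1 -> e x1 x2 -> e x0 x3 -> e x3 x2 ->
  lt x0 x1 + lt x1 x2 = lt x0 x3 + lt x3 x2.
Proof.
move=> lt_irr lt_trans e_cover x0 x1 x2 x3 e01 e12 e03 e32.
have e_cover_converse x y :
    e x y = covers (fun u v => lt v u) x y || covers (fun u v => lt v u) y x.
  by rewrite (covers_converse lt x y) (covers_converse lt y x) orbC.
have up := cover_square_up lt_irr lt_trans e_cover.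
have down := cover_square_up (lt:=fun u v => lt v u) lt_irr
  (fun y x z hyx hzy => lt_trans _ _ _ hzy hyx) e_cover_converse.
have orient := cover_edge_orient lt_irr lt_trans e_cover.
move: (up _ x1 _ _ e03 e32) (up _ x3 _ _ e01 e12) => /implyP up13 /implyP up31.
move: (down _ x1 _ _ e03 e32) (down _ x3 _ _ e01 e12) => /implyP /= down13 /implyP /= down31.
rewrite (orient _ _ e01) (orient _ _ e12) (orient _ _ e03) (orient _ _ e32) in down13 down31.
by move: up13 up31 down13 down31;
  case: (lt x0 x1) (lt x1 x2) (lt x0 x3) (lt x3 x2) => [] [] [] [].
Qed.

Section ThreeColouring.

Variables (T : finType) (e : rel T) (col : T -> nat).
Hypotheses (e_sym : symmetric e) (col_le2 : forall x, col x <= 2)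
  (col_proper : forall x y, e x y -> col x != col y)
  (e_triangle_free : forall x y z, e x y -> e y z -> e x z -> False).

Let up x y := e x y && (col x < col y).
(* With colours in {0, 1, 2}, upward paths have length at most two. *)
Let lt x y := up x y || [exists z, up x z && up z y].

Let lt_col x y : lt x y -> col x < col y.
Proof.
case/orP=> [/andP[_ //]|/existsP[z /andP[/andP[_ hxz] /andP[_ hzy]]]].
exact: ltn_trans hxz hzy.
Qed.

Let lt_up x y : lt x y -> col y <= (col x).+1 -> up x y.
Proof.
case/orP=> [//|/existsP[z /andP[/andP[_ hxz] /andP[_ hzy]]]] hxy; lia.
Qed.

Let lt_trans : transitive lt.
Proof.
move=> y x z hxy hyz; have := col_le2 z; have := lt_col hxy; have := lt_col hyz.
move=> cyz cxy cz.
have uxy : up x y by apply: (lt_up hxy); lia.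
have uyz : up y z by apply: (lt_up hyz); lia.
by apply/orP; right; apply/existsP; exists y; rewrite uxy uyz.
Qed.

Let covers_of_edge x y : e x y -> col x < col y -> covers lt x y.
Proof.
move=> exy cxy; rewrite /covers /lt /up exy cxy /=.
apply/forallP => z; apply/negP => /andP[hxz hzy].
have := col_le2 y; have := lt_col hxz; have := lt_col hzy => czy cxz cy.
have /andP[exz _] : up x z by apply: (lt_up hxz); lia.
have /andP[ezy _] : up z y by apply: (lt_up hzy); lia.
exact: e_triangle_free exz ezy exy.
Qed.

Let edge_of_covers x y : covers lt x y -> e x y.
Proof.
case/andP=> /orP[/andP[//]|/existsP[z /andP[hxz hzy]]] /forallP/(_ z).
by rewrite /lt hxz hzy.
Qed.

Lemma triangle_free_3colourable_cover_graph : cover_graph e.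
Proof.
exists lt; split; first by move=> x; apply/negP => /lt_col; rewrite ltnn.
split; first exact: lt_trans.
move=> x y; apply/idP/idP => [exy|/orP[]/edge_of_covers //].
  have := col_proper exy; rewrite neq_ltn => /orP[cxy|cyx].
  - by rewrite covers_of_edge.
  - by apply/orP; right; apply: covers_of_edge; rewrite // e_sym.
by rewrite e_sym.
Qed.

End ThreeColouring.

Section EvenClosedWalks.

Variables (n : nat) (G : rel 'I_n).
Hypothesis G_sym : symmetric G.

Definition double_cover : rel ('I_n * bool) :=
  fun x y => G x.1 y.1 && (y.2 == ~~ x.2).

Lemma double_cover_sym : symmetric double_cover.
Proof. by move=> [j a] [k b]; rewrite /double_cover /= G_sym; case: a; case: b. Qed.

Lemma double_cover_path_last x p :
  path double_cover x p -> (last x p).2 = x.2 (+) odd (size p).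
Proof.
elim: p x => [|y p IHp] x /=; first by rewrite addbF.
by case/andP=> /andP[_ /eqP y2] /IHp ->; rewrite y2 addbN addNb.
Qed.

Lemma bipartite_of_double_cover :
  (forall j, ~~ connect double_cover (j, false) (j, true)) -> bipartite G.
Proof.
move=> no_flip; have cD := sym_connect_sym double_cover_sym.
(* An edge [j k] swaps the components of the two copies of [j] and [k]. *)
pose r b j : nat := enum_rank (root double_cover (j, b)).
exists (fun j => r false j < r true j) => j k Gjk.
have root_adj b : root double_cover (k, b) = root double_cover (j, ~~ b).
  apply: esym; apply/(rootP cD); apply: connect1.
  by rewrite /double_cover /= Gjk; case: b.
have : r false j != r true j.
  rewrite val_eqE (inj_eq enum_rank_inj); apply: contra (no_flip j).
  by move/eqP/(rootP cD).
by rewrite /r !root_adj /=; case: ltngtP.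
Qed.

Lemma odd_closed_walk_of_double_cover j :
  connect double_cover (j, false) (j, true) ->
  exists (w : nat -> 'I_n) (L : nat),
    [/\ odd L, forall s, G (w s) (w s.+1) & forall s, w (s + L) = w s].
Proof.
set x := (j, false); case/connectP=> p p_path p_last.
have oddL : odd (size p) by have := double_cover_path_last p_path; rewrite -p_last.
have L_gt0 : 0 < size p by case: (size p) oddL.
exists (fun s => (nth x (x :: p) (s %% size p)).1), (size p).
split=> // s; last by rewrite modnDr.
have next : (nth x (x :: p) (s.+1 %% size p)).1 = (nth x p (s %% size p)).1.
  rewrite -addn1 -modnDml addn1.
  have := ltn_pmod s L_gt0; set t := s %% size p.
  rewrite leq_eqVlt => /orP[/eqP tL|tL]; last by rewrite modn_small.
  by rewrite tL modnn -[nth x p t]/(nth x (x :: p) t.+1) tL -last_nth -p_last.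
rewrite next; have := pathP x p_path (s %% size p) (ltn_pmod s L_gt0).
by case/andP.
Qed.

Lemma bipartite_of_even_closed_walks :
  (forall (w : nat -> 'I_n) (L : nat), (forall s, G (w s) (w s.+1)) ->
     (forall s, w (s + L) = w s) -> ~~ odd L) ->
  bipartite G.
Proof.
move=> even_walks; apply: bipartite_of_double_cover => j.
apply/negP => /odd_closed_walk_of_double_cover[w [L [oddL w_edge w_period]]].
by have := even_walks w L w_edge w_period; rewrite oddL.
Qed.

End EvenClosedWalks.

(* Layer [m.+1] is the apex, so the apex edges join layer [m] to the next layer. *)
Definition myc_layer n m (i : nat) (j : 'I_n) : myc_vertex n m :=
  if i <= m then Some (inord i, j) else None.

Lemma myc_layer_apex n m (j : 'I_n) : myc_layer m m.+1 j = None.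
Proof. by rewrite /myc_layer ltnn. Qed.

Section MycielskianEdges.

Variables (n m : nat) (G : rel 'I_n).
Hypothesis G_sym : symmetric G.

Lemma myc_edge_sym : symmetric (myc_edge m G).
Proof.
move=> [[i j]|] [[i' k]|] //=; rewrite (G_sym j k).
by case: (i == 0 :> nat); case: (i' == 0 :> nat); case: (i' == i.+1 :> nat);
   case: (i == i'.+1 :> nat); rewrite /= ?andbF ?orbF.
Qed.

Lemma myc_edge_layer0 j k :
  G j k -> myc_edge m G (myc_layer m 0 j) (myc_layer m 0 k).
Proof. by move=> Gjk; rewrite /myc_layer /= inordK //= Gjk. Qed.

Lemma myc_edge_layerS i j k : i <= m -> G j k ->
  myc_edge m G (myc_layer m i j) (myc_layer m i.+1 k).
Proof.
move=> le_im Gjk; rewrite /myc_layer le_im.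
case: (leqP i.+1 m) => [lt_im|].
  by rewrite /= !inordK ?ltnS ?(ltnW lt_im) ?eqxx ?Gjk ?orbT.
by rewrite ltnS => le_mi; rewrite /= inordK // eqn_leq le_im le_mi.
Qed.

Lemma myc_edge_layerSr i j k : i <= m -> G j k ->
  myc_edge m G (myc_layer m i.+1 j) (myc_layer m i k).
Proof. by move=> le_im Gjk; rewrite myc_edge_sym myc_edge_layerS // G_sym. Qed.

Lemma myc_edge_over i j i' k : myc_edge m G (Some (i, j)) (Some (i', k)) -> G j k.
Proof. by case/or3P=> [/and3P[]|/andP[]|/andP[]]. Qed.

End MycielskianEdges.

Section ClosedWalkAscents.

Variables (n m : nat) (G : rel 'I_n) (lt : rel (myc_vertex n m)).
Hypotheses (G_sym : symmetric G) (lt_irr : irreflexive lt) (lt_trans : transitive lt)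
  (myc_cover : forall x y, myc_edge m G x y = covers lt x y || covers lt y x).
Variables (w : nat -> 'I_n) (L : nat).
Hypotheses (w_edge : forall s, G (w s) (w s.+1)) (w_period : forall s, w (s + L) = w s).

Definition ascent i i' s : nat :=
  lt (myc_layer m i (w s)) (myc_layer m i' (w s.+1)).

(* The upward steps of the closed walk of length [2 L] that follows [w] while
   alternating between layers [k] and [k.+1]. *)
Definition zigzag_ascents k :=
  \sum_(0 <= s < L) (ascent k k.+1 s + ascent k.+1 k s).

Lemma sum_ascent_shift i i' :
  \sum_(0 <= s < L) ascent i i' s.+1 = \sum_(0 <= s < L) ascent i i' s.
Proof.
have ascent_L : ascent i i' L = ascent i i' 0.
  by rewrite /ascent -(add0n L) -addSn !w_period.
apply/(@addnI (ascent i i' 0)); rewrite -big_nat_recl // big_nat_recr //=.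
by rewrite ascent_L addnC.
Qed.

Lemma sum_ascent_square a b c d :
  (forall s, ascent a b s + ascent b a s.+1 = ascent a c s + ascent c d s.+1) ->
  \sum_(0 <= s < L) ascent a b s + \sum_(0 <= s < L) ascent b a s =
  \sum_(0 <= s < L) ascent a c s + \sum_(0 <= s < L) ascent c d s.
Proof.
move=> square; rewrite -(sum_ascent_shift b a) -(sum_ascent_shift c d) -!big_split /=.
exact: eq_bigr.
Qed.

Lemma zigzag_ascents0 : zigzag_ascents 0 = (\sum_(0 <= s < L) ascent 0 0 s).*2.
Proof.
rewrite -addnn /zigzag_ascents big_split /=; symmetry; apply: sum_ascent_square => s.
apply: (cover_square lt_irr lt_trans myc_cover).
- exact: myc_edge_layer0.
- exact: myc_edge_layer0.
- exact: myc_edge_layerS.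
- exact: myc_edge_layerSr.
Qed.

Lemma zigzag_ascentsS k : k < m -> zigzag_ascents k = zigzag_ascents k.+1.
Proof.
move=> lt_km; rewrite /zigzag_ascents !big_split /= addnC.
apply: sum_ascent_square => s.
apply: (cover_square lt_irr lt_trans myc_cover).
- exact: myc_edge_layerSr (ltnW lt_km) _.
- exact: myc_edge_layerS (ltnW lt_km) _.
- exact: myc_edge_layerS.
- exact: myc_edge_layerSr.
Qed.

Lemma zigzag_ascents_apex : zigzag_ascents m = L.
Proof.
have apex_once s : ascent m.+1 m s + ascent m m.+1 s.+1 = 1.
  have := myc_edge_layerS (leqnn m) (w_edge s.+1).
  rewrite /ascent !myc_layer_apex => edge.
  by rewrite (cover_edge_orient lt_irr lt_trans myc_cover edge); case: (lt _ _).
rewrite /zigzag_ascents big_split /= -(sum_ascent_shift m m.+1) addnC -big_split /=.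
rewrite (eq_bigr (fun=> 1)) => [|s _]; last exact: apex_once.
by rewrite sum_nat_const_nat subn0 muln1.
Qed.

Lemma myc_closed_walk_even : ~~ odd L.
Proof.
have zigzag_const k : k <= m -> zigzag_ascents 0 = zigzag_ascents k.
  elim: k => [_|k IHk lt_km]; first reflexivity.
  by rewrite -(zigzag_ascentsS lt_km) IHk // ltnW.
by rewrite -zigzag_ascents_apex -(zigzag_const m) // zigzag_ascents0 odd_double.
Qed.

End ClosedWalkAscents.

Section MycielskianOfBipartite.

Variables (n m : nat) (G : rel 'I_n) (c : 'I_n -> bool).
Hypotheses (m_gt0 : 0 < m) (c_proper : forall j k, G j k -> c j != c k).

Definition myc_colour (x : myc_vertex n m) : nat :=
  if x is Some (_, j) then c j else 2.

Lemma myc_edge_top_layer (i i' : 'I_m.+1) j k : i = m :> nat -> i' = m :> nat ->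
  ~~ myc_edge m G (Some (i, j)) (Some (i', k)).
Proof.
move=> /= -> ->; apply/negP.
by case/or3P=> [/and3P[/eqP]|/andP[/eqP]|/andP[/eqP]] //; lia.
Qed.

Lemma myc_colour_proper x y : myc_edge m G x y -> myc_colour x != myc_colour y.
Proof.
case: x y => [[i j]|] [[i' k]|] //=.
- by move/myc_edge_over/c_proper; case: (c j); case: (c k).
- by case: (c j).
- by case: (c k).
Qed.

Lemma myc_triangle_free x y z :
  myc_edge m G x y -> myc_edge m G y z -> myc_edge m G x z -> False.
Proof.
case: x y z => [[i j]|] [[i' k]|] [[i'' l]|] //=.
- move=> /myc_edge_over/c_proper Gjk /myc_edge_over/c_proper Gkl.
  move=> /myc_edge_over/c_proper Gjl.
  by move: Gjk Gkl Gjl; case: (c j); case: (c k); case: (c l).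
- by move=> + /eqP i'm /eqP im; apply/negP/myc_edge_top_layer.
- by move=> /eqP im /eqP i''m; apply/negP/myc_edge_top_layer.
- by move=> /eqP i'm + /eqP i''m; apply/negP/myc_edge_top_layer.
Qed.

Lemma myc_cover_graph_of_bipartite : symmetric G -> cover_graph (myc_edge m G).
Proof.
move=> G_sym; apply: (triangle_free_3colourable_cover_graph (col:=myc_colour)).
- exact: myc_edge_sym.
- by move=> [[_ j]|] //=; case: (c j).
- exact: myc_colour_proper.
- exact: myc_triangle_free.
Qed.

End MycielskianOfBipartite.

Theorem theorem8 (n m : nat) (G : rel 'I_n) :
  simple_graph G -> 0 < m ->
  (cover_graph (myc_edge m G) <-> bipartite G).
Proof.
move=> [G_sym _] m_gt0; split => [[lt [lt_irr [lt_trans myc_cover]]]|[c c_proper]].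
- apply: bipartite_of_even_closed_walks => // w L w_edge w_period.
  exact: (myc_closed_walk_even G_sym lt_irr lt_trans myc_cover w_edge w_period).
- exact: (myc_cover_graph_of_bipartite m_gt0 c_proper G_sym).
Qed.
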